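(* Let $b \ge 1$, $d=b+1$, $n=2b$, and let $f,g:\mathbb{F}_2^d\to\mathbb{F}_2$ be bipermutive local rules that are both nonlinear (algebraic degree at least $2$) and such that the no-boundary CA $F,G:\mathbb{F}_2^{2b}\to\mathbb{F}_2^b$ they define form a pair of orthogonal CA. Let $H:\mathbb{F}_2^n\to\mathbb{F}_2^n$ be the superposition S-box of $F$ and $G$. If $v\in\mathbb{F}_2^n\setminus\{\underline 0\}$ satisfies $nl(v\cdot H)=0$, then $supp(v)$ contains at least one index in $\{1,\dots,b\}$ and at least one index in $\{b+1,\dots,n\}$.
   Context: A local rule $f:\mathbb{F}_2^d\to\mathbb{F}_2$ with $d\ge 2$ is bipermutive if $f(x_1,\dots,x_d)=x_1\oplus \varphi(x_2,\dots,x_{d-1})\oplus x_d$ for some $\varphi:\mathbb{F}_2^{d-2}\to\mathbb{F}_2$. For $b=d-1$, the no-boundary CA with local rule $f$ is $F:\mathbb{F}_2^{2b}\to\mathbb{F}_2^b$, $F(x)_i=f(x_i,\dots,x_{i+b})$ for $i=1,\dots,b$. Such an $F$ defines a $2^b\times 2^b$ Latin square whose entry at row $x\in\mathbb{F}_2^b$ and column $y\in\mathbb{F}_2^b$ is $F(x\|y)$ ($\|$ = concatenation). Two such CA $F,G$ (with bipermutive rules $f,g$ of the same diameter) are orthogonal (an OCA pair) if their Latin squares are orthogonal, i.e. the map $(x,y)\mapsto (F(x\|y),G(x\|y))$ is a bijection of $\mathbb{F}_2^b\times\mathbb{F}_2^b$. The superposition S-box is $H(x)=F(x)\|G(x)$,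 i.e. $H(x)_i=f(x_i,\dots,x_{i+b})$ and $H(x)_{b+i}=g(x_i,\dots,x_{i+b})$ for $i=1,\dots,b$. For $v\in\mathbb{F}_2^n\setminus\{\underline 0\}$, $v\cdot H(x)=\bigoplus_i v_iH(x)_i$; $supp(v)=\{i: v_i\ne 0\}$. $nl(h)$ denotes the minimum Hamming distance of the Boolean function $h$ to the affine functions, so $nl(h)=0$ iff $h$ is affine. *)

(* F_2 is modelled by bool (xor = addb, product = andb). *)
From mathcomp Require Import all_boot.
Set Implicit Arguments. Unset Strict Implicit. Unset Printing Implicit Defensive.

(* Vectors of F_2^n, indexed 0..n-1 (paper index i <-> ordinal i-1). *)
Definition vec (n : nat) := {ffun 'I_n -> bool}.

(* Coordinate k of x (0-based); false when out of range (never used so). *)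
Definition coord (n : nat) (x : vec n) (k : nat) : bool :=
  if (insub k : option 'I_n) is Some i then x i else false.

Definition middle (d : nat) (x : vec d) : vec (d - 2) :=
  [ffun i : 'I_(d - 2) => coord x i.+1].
Definition bipermutive (d : nat) (f : vec d -> bool) : Prop :=
  2 <= d /\ exists phi : vec (d - 2) -> bool,
    forall x : vec d,
      f x = coord x 0 (+) phi (middle x) (+) coord x d.-1.

Definition subvec (n : nat) (x u : vec n) : bool := [forall i, x i ==> u i].
Definition anf_coef (n : nat) (h : vec n -> bool) (u : vec n) : bool :=
  \big[addb/false]_(x : vec n | subvec x u) h x.
Definition hweight (n : nat) (u : vec n) : nat := #|[pred i | u i]|.
Definition alg_degree (n : nat) (h : vec n -> bool) : nat :=
  \max_(u : vec n | anf_coef h u) hweight u.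

Definition dotv (n : nat) (a x : vec n) : bool :=
  \big[addb/false]_(i < n) (a i && x i).

Definition hdist (n : nat) (h k : vec n -> bool) : nat :=
  #|[pred x : vec n | h x != k x]|.
Definition nl (n : nat) (h : vec n -> bool) : nat :=
  \big[minn/2 ^ n]_(a : vec n) \big[minn/2 ^ n]_(c : bool)
     hdist h (fun x => dotv a x (+) c).

Definition nbCA (b : nat) (f : vec b.+1 -> bool) (x : vec (b + b)) : vec b :=
  [ffun i : 'I_b => f [ffun j : 'I_b.+1 => coord x (i + j)]].

Definition concat (b : nat) (x y : vec b) : vec (b + b) :=
  [ffun i : 'I_(b + b) => match split i with inl j => x j | inr j => y j end].

(* Orthogonality of the Latin squares of F and G. *)
Definition orthogonal_CA (b : nat) (f g : vec b.+1 -> bool) : Prop :=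
  bijective (fun p : vec b * vec b =>
    (nbCA f (concat p.1 p.2), nbCA g (concat p.1 p.2))).

Definition sbox (b : nat) (f g : vec b.+1 -> bool) (x : vec (b + b)) : vec (b + b) :=
  concat (nbCA f x) (nbCA g x).

From mathcomp Require Import all_boot zify.
Set Implicit Arguments. Unset Strict Implicit. Unset Printing Implicit Defensive.

(* Only the nonlinearity of f and g matters.  Affine functions have vanishing
   second-order derivatives, while a nonzero ANF monomial of degree >= 2 gives
   a nonzero second-order derivative of f.  If supp(v) lies in the F-half, then
   v.H(x) = sum_{i in A} f(x_i, ..., x_{i+b}) for a nonempty set A of shifts.
   Let m = max A and choose directions (J, K) with a nonzero derivative of f and
   K as large as possible.  In directions (J + m, K + m) only the shift m sees a
   nonzero derivative: for i < m the second direction K + m - i exceeds K.  So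
   v.H is not affine; symmetrically for the G-half. *)

Definition toggle n (x : vec n) (t : nat) : vec n :=
  [ffun j => x j (+) (j == t :> nat)].

Definition deriv2 n (h : vec n -> bool) (s t : nat) (x : vec n) : bool :=
  h x (+) h (toggle x s) (+) h (toggle x t) (+) h (toggle (toggle x s) t).

Lemma toggleE n (x : vec n) t j : toggle x t j = x j (+) (j == t :> nat).
Proof. by rewrite ffunE. Qed.

Lemma toggle_out n (x : vec n) t : n <= t -> toggle x t = x.
Proof.
move=> le_nt; apply/ffunP => j; rewrite toggleE.
by have /ltn_eqF -> : j < t := leq_trans (ltn_ord j) le_nt; rewrite addbF.
Qed.

Lemma toggleC n (x : vec n) s t : toggle (toggle x s) t = toggle (toggle x t) s.
Proof. by apply/ffunP => j; rewrite !toggleE addbAC. Qed.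

Lemma toggleK n t : involutive (@toggle n ^~ t).
Proof. by move=> x; apply/ffunP => j; rewrite !toggleE -addbA addbb addbF. Qed.

Lemma eq_deriv2 n (h h' : vec n -> bool) s t x :
  h =1 h' -> deriv2 h s t x = deriv2 h' s t x.
Proof. by move=> eq_h; rewrite /deriv2 !eq_h. Qed.

Lemma deriv2C n (h : vec n -> bool) s t x : deriv2 h s t x = deriv2 h t s x.
Proof. by rewrite /deriv2 toggleC -!addbA (addbCA (h (toggle x s))). Qed.

Lemma deriv2_out n (h : vec n -> bool) s t x : n <= t -> deriv2 h s t x = false.
Proof.
move=> le_nt; rewrite /deriv2 !(toggle_out _ le_nt).
by case: (h x); case: (h (toggle x s)).
Qed.

Lemma deriv2_affine n (w : vec n) c s t x :
  deriv2 (fun y => dotv w y (+) c) s t x = false.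
Proof.
have dotv_toggle (y : vec n) r :
    dotv w (toggle y r) = dotv w y (+) dotv w [ffun j : 'I_n => j == r :> nat].
  by rewrite /dotv -big_split; apply: eq_bigr => j _; rewrite !ffunE; case: (w j).
rewrite /deriv2 !dotv_toggle.
by case: (dotv w x); case: (dotv w _); case: (dotv w _); case: c.
Qed.

Lemma deriv2_sum n I (r : seq I) (a : I -> bool) (h : I -> vec n -> bool) s t x :
  deriv2 (fun y => \big[addb/false]_(i <- r) (a i && h i y)) s t x =
  \big[addb/false]_(i <- r) (a i && deriv2 (h i) s t x).
Proof.
rewrite /deriv2 -!big_split; apply: eq_bigr => i _.
by case: (a i).
Qed.

Lemma big_addb_toggle n (P : pred (vec n)) (h : vec n -> bool) (p : 'I_n) :
  (forall x, P (toggle x p) = P x) ->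
  \big[addb/false]_(x | P x) h x =
  \big[addb/false]_(x | P x && ~~ x p) (h x (+) h (toggle x p)).
Proof.
move=> P_toggle; rewrite (bigID (fun x : vec n => x p)) /= big_split /= addbC.
congr (_ (+) _); rewrite (reindex_inj (can_inj (toggleK p))) /=.
by apply: eq_bigl => x; rewrite P_toggle toggleE eqxx addbT.
Qed.

Lemma subvec_toggle n (x u : vec n) (j : 'I_n) :
  u j -> subvec (toggle x j) u = subvec x u.
Proof.
move=> uj; apply: eq_forallb => i; rewrite toggleE val_eqE.
by case: eqP => [->|_]; rewrite ?uj ?implybT ?addbF.
Qed.

Lemma anf_coef_deriv2 n (h : vec n -> bool) (u : vec n) (j k : 'I_n) :
  u j -> u k -> j != k ->
  anf_coef h u =
  \big[addb/false]_(x | subvec x u && ~~ x j && ~~ x k) deriv2 h j k x.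
Proof.
move=> uj uk neq_jk; rewrite /anf_coef (big_addb_toggle _ (fun x => subvec_toggle x uj)).
rewrite (@big_addb_toggle _ (fun x => subvec x u && ~~ x j) _ k) => [|x].
  by apply: eq_bigr => x _; rewrite /deriv2 (toggleC _ k) -!addbA.
by rewrite subvec_toggle // toggleE val_eqE (negbTE neq_jk) addbF.
Qed.

Lemma deriv2_of_alg_degree n (h : vec n -> bool) :
  2 <= alg_degree h -> exists (j k : 'I_n) x, deriv2 h j k x.
Proof.
move=> deg_h.
have [u /andP[hu]] : exists u, anf_coef h u && (1 < hweight u).
  apply/existsP; apply: contraLR deg_h; rewrite negb_exists -ltnNge ltnS.
  move=> /forallP small; apply/bigmax_leqP => u hu.
  by move: (small u); rewrite hu -leqNgt.
case/card_gt1P => j [k [uj uk neq_jk]].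
exists j, k; apply/existsP; apply: contraLR hu; rewrite negb_exists => /forallP.
by move=> no_deriv; rewrite (anf_coef_deriv2 _ uj uk neq_jk) big1 // => x _; apply/negbTE.
Qed.

Lemma deriv2_top n (h : vec n -> bool) :
  (exists (j k : 'I_n) x, deriv2 h j k x) ->
  exists (J K : 'I_n) y, deriv2 h J K y /\
    forall j k z, K < k -> deriv2 h j k z = false.
Proof.
move=> [j0 [k0 [x0 hx0]]].
pose P (p : 'I_n * 'I_n) := [exists y, deriv2 h p.1 p.2 y].
have P0 : P (j0, k0) by apply/existsP; exists x0.
case: (arg_maxnP (fun p : 'I_n * 'I_n => val p.2) P0) => -[J K] /existsP[y hy] top.
exists J, K, y; split=> // j k z lt_Kk; apply/negbTE/negP => hz.
have [le_nj|lt_jn] := leqP n j; first by rewrite deriv2C deriv2_out in hz.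
have [le_nk|lt_kn] := leqP n k; first by rewrite deriv2_out in hz.
have : P (Ordinal lt_jn, Ordinal lt_kn) by apply/existsP; exists z.
by move/top; rewrite /geq /= leqNgt lt_Kk.
Qed.

Definition window b (x : vec (b + b)) (i : nat) : vec b.+1 :=
  [ffun j : 'I_b.+1 => coord x (i + j)].

Lemma coord_ord n (x : vec n) (i : 'I_n) : coord x i = x i.
Proof. by rewrite /coord valK. Qed.

Lemma coord_toggle n (x : vec n) p t :
  p < n -> coord (toggle x p) t = coord x t (+) (t == p).
Proof.
move=> lt_pn; rewrite /coord; case: insubP => [i _ <-|]; first by rewrite toggleE.
rewrite -leqNgt => le_nt.
by have /gtn_eqF -> : p < t := leq_trans lt_pn le_nt; rewrite addbF.
Qed.

Lemma window_toggle b (x : vec (b + b)) p i :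
  i <= p -> p < b + b -> window (toggle x p) i = toggle (window x i) (p - i).
Proof.
move=> le_ip lt_p; apply/ffunP => j; rewrite toggleE !ffunE coord_toggle //.
by congr (_ (+) _); apply/eqP/eqP => /= E; lia.
Qed.

Lemma deriv2_window b (f : vec b.+1 -> bool) (x : vec (b + b)) p q i :
  i <= p -> i <= q -> p < b + b -> q < b + b ->
  deriv2 (fun z => f (window z i)) p q x = deriv2 f (p - i) (q - i) (window x i).
Proof. by move=> *; rewrite /deriv2 !window_toggle. Qed.

Lemma window_shift b (y : vec b.+1) (m : nat) :
  m < b -> window [ffun t : 'I_(b + b) => coord y (t - m)] m = y.
Proof.
move=> lt_mb; apply/ffunP => j; rewrite !ffunE.
have lt_mj : m + j < b + b by move: (ltn_ord j); lia.
by rewrite (coord_ord _ (Ordinal lt_mj)) ffunE /= addKn coord_ord.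
Qed.

Lemma shifted_sum_not_affine b (f : vec b.+1 -> bool) (a : 'I_b -> bool)
    (i0 : 'I_b) (w : vec (b + b)) (c : bool) :
  a i0 -> 2 <= alg_degree f ->
  ~ (forall x, \big[addb/false]_(i < b) (a i && f (window x i)) = dotv w x (+) c).
Proof.
move=> a_i0 /deriv2_of_alg_degree/deriv2_top[J [K [y [fJK top]]]] affine.
case: (arg_maxnP (@nat_of_ord b) a_i0) => m a_m max_m.
pose x : vec (b + b) := [ffun t : 'I_(b + b) => coord y (t - m)].
have lt_Jm : J + m < b + b by move: (ltn_ord J) (ltn_ord m); lia.
have lt_Km : K + m < b + b by move: (ltn_ord K) (ltn_ord m); lia.
have := deriv2_affine w c (J + m) (K + m) x.
rewrite -(eq_deriv2 _ _ _ affine) deriv2_sum (bigD1 m) //= a_m.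
rewrite deriv2_window ?leq_addl // !addnK window_shift // fJK big1 // => i ne_im.
case: (a i) (max_m i) => //= /(_ isT) le_im.
have lt_im : i < m by rewrite ltn_neqAle le_im andbT.
by rewrite deriv2_window ?top //; lia.
Qed.

Lemma concat_lshift b (y z : vec b) i : concat y z (lshift b i) = y i.
Proof. by rewrite ffunE (unsplitK (inl i : 'I_b + 'I_b)). Qed.

Lemma concat_rshift b (y z : vec b) i : concat y z (rshift b i) = z i.
Proof. by rewrite ffunE (unsplitK (inr i : 'I_b + 'I_b)). Qed.

Lemma dotv_sbox b (f g : vec b.+1 -> bool) (v x : vec (b + b)) :
  dotv v (sbox f g x) =
  \big[addb/false]_(i < b) (v (lshift b i) && f (window x i)) (+)
  \big[addb/false]_(i < b) (v (rshift b i) && g (window x i)).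
Proof.
rewrite /dotv big_split_ord /sbox.
by congr (_ (+) _); apply: eq_bigr => i _; rewrite ?concat_lshift ?concat_rshift ffunE.
Qed.

Lemma nl_eq0_affine n (h : vec n -> bool) :
  nl h = 0 -> exists w c, forall x, h x = dotv w x (+) c.
Proof.
move=> nl0.
have [/existsP[w /existsP[c /eqP dist0]]|] :=
  boolP [exists w, exists c, hdist h (fun x => dotv w x (+) c) == 0].
  by exists w, c => x; move: (card0_eq dist0 x); rewrite !inE => /negbFE/eqP.
rewrite negb_exists => /forallP far; suff : 0 < nl h by rewrite nl0.
rewrite /nl; apply: (big_ind (fun k => 0 < k)) => [|k l k0 l0|w' _];
  rewrite ?expn_gt0 ?leq_min ?k0 ?l0 //.
apply: (big_ind (fun k => 0 < k)) => [|k l k0 l0|c _];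
  rewrite ?expn_gt0 ?leq_min ?k0 ?l0 //.
by move: (far w'); rewrite negb_exists => /forallP /(_ c); rewrite lt0n.
Qed.

Lemma nonzero_half b (v : vec (b + b)) :
  v != [ffun => false] ->
  (exists i : 'I_b, v (lshift b i)) \/ (exists i : 'I_b, v (rshift b i)).
Proof.
move=> v_neq0; have [t vt] : exists t, v t.
  apply/existsP; apply: contraNT v_neq0; rewrite negb_exists => /forallP v0.
  by apply/eqP/ffunP => t; rewrite ffunE; apply/negbTE.
case: (splitP t) => i E; [left | right]; exists i.
  by rewrite (_ : lshift b i = t) //; apply: val_inj.
by rewrite (_ : rshift b i = t) //; apply: val_inj.
Qed.

Theorem lemma2 (b : nat) (f g : vec b.+1 -> bool) (v : vec (b + b)) :
  1 <= b ->
  bipermutive f -> bipermutive g ->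
  2 <= alg_degree f -> 2 <= alg_degree g ->
  orthogonal_CA f g ->
  v != [ffun => false] ->
  nl (fun x => dotv v (sbox f g x)) = 0 ->
  (exists i : 'I_b, v (lshift b i)) /\ (exists i : 'I_b, v (rshift b i)).
Proof.
move=> _ _ _ deg_f deg_g _ /nonzero_half halves /nl_eq0_affine[w [c affine]].
have L_R : (exists i, v (lshift b i)) -> exists i, v (rshift b i).
  move=> [i vi]; apply/existsP/contraT; rewrite negb_exists => /forallP R0; exfalso.
  apply: (@shifted_sum_not_affine _ f (fun j => v (lshift b j)) i w c vi deg_f) => x.
  rewrite -affine dotv_sbox [X in _ = _ (+) X]big1 ?addbF // => j _.
  by rewrite (negbTE (R0 j)).
have R_L : (exists i, v (rshift b i)) -> exists i, v (lshift b i).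
  move=> [i vi]; apply/existsP/contraT; rewrite negb_exists => /forallP L0; exfalso.
  apply: (@shifted_sum_not_affine _ g (fun j => v (rshift b j)) i w c vi deg_g) => x.
  rewrite -affine dotv_sbox [X in _ = X (+) _]big1 // => j _.
  by rewrite (negbTE (L0 j)).
by case: halves => [/[dup] /L_R | /[dup] /R_L]; split.
Qed.
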